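(* For every $\alpha\in(0,1)$, the function $\delta\mapsto\psi_2\big(\alpha,L(\alpha;\delta);\delta\big)$ is strictly decreasing on $\delta\in(0,\infty)$.
   Context: For real $\alpha\ge0$, $\sigma^2\ge0$, $(\alpha,\sigma^2)\ne(0,0)$: $\psi_2(\alpha,\sigma^2;\delta)=\frac4\delta\big(\alpha^2+\sigma^2+1-\int_0^{\pi/2}\frac{2\alpha^2\sin^2\theta+\sigma^2}{(\alpha^2\sin^2\theta+\sigma^2)^{1/2}}d\theta\big)$. For $s\ge0$ let $\phi_1(s)=\int_0^{\pi/2}\frac{\sin^2\theta}{(\sin^2\theta+s^2)^{1/2}}d\theta$ (strictly decreasing from $1$ to $0$, inverse $\phi_1^{-1}:(0,1]\to[0,\infty)$) and $\phi_2(s)=\int_0^{\pi/2}\frac{2\sin^2\theta+s^2}{(\sin^2\theta+s^2)^{1/2}}d\theta$. For $\alpha\in(0,1)$, $\delta>0$: $L(\alpha;\delta)=\frac4\delta\Big(1-\frac{\phi_2^2(\phi_1^{-1}(\alpha))}{4[1+(\phi_1^{-1}(\alpha))^2]}\Big)$. *)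

From Stdlib Require Import Reals Lra ClassicalEpsilon.
Open Scope R_scope.

(* Riemann integral of f over [a,b], as a total function: the (unique, by
   RiemannInt_P5) value of RiemannInt pr for any integrability proof pr.
   Unspecified if f is not Riemann integrable (never used in that case). *)
Definition integral (f : R -> R) (a b : R) : R :=
  epsilon (inhabits 0)
    (fun v => exists pr : Riemann_integrable f a b, RiemannInt pr = v).

(* psi_2(alpha, sigma^2; delta); the second argument s2 is sigma^2 itself. *)
Definition psi2 (a s2 d : R) : R :=
  4 / d * (a ^ 2 + s2 + 1 -
    integral (fun t => (2 * a ^ 2 * sin t ^ 2 + s2) / sqrt (a ^ 2 * sin t ^ 2 + s2))
      0 (PI / 2)).

Definition phi1 (s : R) : R :=
  integral (fun t => sin t ^ 2 / sqrt (sin t ^ 2 + s ^ 2)) 0 (PI / 2).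

Definition phi2 (s : R) : R :=
  integral (fun t => (2 * sin t ^ 2 + s ^ 2) / sqrt (sin t ^ 2 + s ^ 2)) 0 (PI / 2).

(* Inverse of phi1 on (0,1]: the s >= 0 with phi1 s = a (unique since phi1 is
   strictly decreasing on [0,oo)). *)
Definition phi1_inv (a : R) : R :=
  epsilon (inhabits 0) (fun s => 0 <= s /\ phi1 s = a).

Definition Lfun (a d : R) : R :=
  4 / d * (1 - phi2 (phi1_inv a) ^ 2 / (4 * (1 + phi1_inv a ^ 2))).

From Stdlib Require Import Reals Lra Psatz Factorial ClassicalEpsilon FunctionalExtensionality.
From Coquelicot Require Import Coquelicot.
Open Scope R_scope.

(* With c := 1 - phi2(s)^2 / (4 (1 + s^2)) and s := phi1_inv a, one has
   L(a; d) = 4 c / d, and c >= 0 because phi2 s <= 2 sqrt (1 + s^2); nothing else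
   about s is needed.  If c = 0 the claim is that 4 (1 - a)^2 / d decreases.  If
   c > 0, put x = 4 c / d, which decreases with d; then psi2 = F(x) / c with
   F(x) = x (a^2 + x + 1 - I(x)), I(x) = int_0^(PI/2) k(a sin t, x) dt and
   k(s, x) = (2 s^2 + x) / sqrt (s^2 + x), so it suffices that F increases.
   As x |-> x k(s, x) is convex and its derivative decreases in s, Jordan's
   inequality a sin t >= 2 a t / PI bounds z I(z) - y I(y) by (z - y) times an
   elementary integral, which is at most a^2 + 1 + 19 z / 10.  Hence F(y) < F(z)
   whenever y < z < 10 y / 9, and chaining such steps gives monotonicity. *)


Lemma integral_RInt f a b : ex_RInt f a b -> integral f a b = RInt f a b.
Proof.
  intros Hf. unfold integral.
  destruct (epsilon_spec (inhabits 0)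
              (fun v => exists pr : Riemann_integrable f a b, RiemannInt pr = v))
    as [pr <-].
  { exists (RiemannInt (ex_RInt_Reals_0 _ _ _ Hf)). now eexists. }
  symmetry; apply RInt_Reals.
Qed.

Lemma PI_lt_16_5 : PI < 16/5.
Proof.
  (* otherwise [sin (16/5) >= 0], against its degree-9 Taylor upper bound *)
  destruct (Rlt_or_le PI (16/5)) as [h|h]; [exact h|exfalso].
  assert (Hub := proj2 (pre_sin_bound (16/5) 1 ltac:(lra) ltac:(lra))).
  assert (Hsin : 0 <= sin (16/5)) by (apply sin_ge_0; lra).
  unfold sin_approx, sin_term in Hub.
  change (2 * (1 + 1))%nat with 4%nat in Hub.
  cbn [sum_f_R0 Nat.mul Nat.add] in Hub.
  rewrite !fact_simpl, !mult_INR in Hub. simpl fact in Hub.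
  rewrite !S_INR in Hub. cbn [INR] in Hub.
  lra.
Qed.

(* Jordan's inequality, from concavity of sin on [0, PI/2] via two mean-value steps. *)
Lemma Jordan_ineq t : 0 <= t <= PI/2 -> 2/PI*t <= sin t.
Proof.
  intros Ht. assert (HP := PI_RGT_0).
  destruct (Rle_or_lt (2/PI*t) (sin t)) as [h|h]; [exact h|exfalso].
  set (g := fun x => sin x - 2/PI*x).
  set (g' := fun x => cos x - 2/PI).
  assert (Dg : forall c, derivable_pt_lim g c (g' c)).
  { intros c. apply derivable_pt_lim_minus; [apply derivable_pt_lim_sin|].
    replace (2/PI) with (2/PI*1) at 2 by ring.
    apply derivable_pt_lim_scal, derivable_pt_lim_id. }
  assert (t0 : 0 < t).
  { destruct (Req_dec t 0) as [->|]; [rewrite sin_0 in h; lra|lra]. }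
  assert (t1 : t < PI/2).
  { destruct (Req_dec t (PI/2)) as [->|]; [|lra].
    rewrite sin_PI2 in h. field_simplify in h; lra. }
  destruct (MVT_cor2 g g' 0 t t0 (fun c _ => Dg c)) as [c1 [E1 C1]].
  destruct (MVT_cor2 g g' t (PI/2) t1 (fun c _ => Dg c)) as [c2 [E2 C2]].
  unfold g, g' in E1, E2. rewrite sin_0, sin_PI2 in *.
  assert (cos c1 < 2/PI).
  { assert ((cos c1 - 2/PI) * (t - 0) < 0) by (rewrite <- E1; lra). nra. }
  assert (2/PI < cos c2).
  { assert (E : 1 - 2/PI*(PI/2) = 0) by (field; lra).
    assert ((cos c2 - 2/PI) * (PI/2 - t) > 0) by (rewrite <- E2; lra). nra. }
  assert (cos c2 < cos c1) by (apply cos_decreasing_1; lra).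
  lra.
Qed.

Lemma Jordan_ineq_scaled a t : 0 <= a -> 0 <= t <= PI/2 -> 0 <= 2*a/PI*t <= a * sin t.
Proof.
  intros Ha Ht. assert (HP := PI_RGT_0).
  replace (2*a/PI*t) with (a * (2/PI*t)) by (field; lra).
  split; [apply Rmult_le_pos; [|apply Rmult_le_pos; [apply Rdiv_le_0_compat|]]; lra|].
  apply Rmult_le_compat_l; [lra|now apply Jordan_ineq].
Qed.

Definition kernel (s x : R) : R := (2*s^2 + x) / sqrt (s^2 + x).

(* [2*s + slope1 s x + slope2 s x] is the derivative of [x |-> x * kernel s x]. *)
Definition slope1 (s x : R) : R := x^2 / (2 * sqrt (s^2 + x)^3).
Definition slope2 (s x : R) : R := x^2 / (sqrt (s^2 + x) * (sqrt (s^2 + x) + s)^2).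

Lemma sqrt_sqr_add_spec s x : 0 <= s -> 0 < x ->
  let r := sqrt (s^2 + x) in r * r = s^2 + x /\ 0 < r /\ s < r.
Proof.
  intros Hs Hx r.
  assert (e : r * r = s^2 + x) by (apply sqrt_sqrt; nra).
  assert (p : 0 < r) by (apply sqrt_lt_R0; nra).
  repeat split; nra.
Qed.

Lemma kernel_eq_slope2 s x : 0 <= s -> 0 < x -> kernel s x = 2*s + slope2 s x.
Proof.
  intros Hs Hx. unfold kernel, slope2.
  destruct (sqrt_sqr_add_spec s x Hs Hx) as [e [p q]].
  set (r := sqrt (s^2 + x)) in *. clearbody r.
  replace x with (r*r - s^2) by lra. field. lra.
Qed.

(* Convexity of [x |-> x * kernel s x]: a chord lies below the tangent at its right end. *)
Lemma kernel_secant_le s y z : 0 <= s -> 0 < y -> y <= z ->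
  z * kernel s z - y * kernel s y <= (z - y) * (2*s + slope1 s z + slope2 s z).
Proof.
  intros Hs Hy Hyz. unfold kernel, slope1, slope2.
  destruct (sqrt_sqr_add_spec s y Hs Hy) as [e1 [p1 q1]].
  destruct (sqrt_sqr_add_spec s z Hs ltac:(lra)) as [e2 [p2 q2]].
  assert (r12 : sqrt (s^2 + y) <= sqrt (s^2 + z)) by (apply sqrt_le_1_alt; lra).
  set (r1 := sqrt (s^2 + y)) in *. set (r2 := sqrt (s^2 + z)) in *.
  clearbody r1 r2.
  replace y with (r1*r1 - s^2) by lra. replace z with (r2*r2 - s^2) by lra.
  assert (N : s^4 * (r1 + 2*r2) <= r1 * r2^3 * (r2 + 2*r1)).
  { assert (s^4 <= r1^4) by (apply pow_incr; lra).
    assert (r1^3 <= r2^3) by (apply pow_incr; lra).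
    assert (r1^4*(r1+2*r2) <= r1*r2^3*(r2+2*r1)).
    { assert (r1^4 <= r2^4) by (apply pow_incr; lra).
      assert (r1*r2*(r1*r1) <= r1*r2*(r2*r2)) by (apply Rmult_le_compat_l; nra).
      nra. }
    assert (s^4*(r1+2*r2) <= r1^4*(r1+2*r2)) by (apply Rmult_le_compat_r; lra).
    lra. }
  match goal with |- ?L <= ?R =>
    replace L with (R - (r2-r1)^2 * (r1*r2^3*(r2+2*r1) - s^4*(r1+2*r2)) / (2*r1*r2^3))
      by (field; lra) end.
  assert (0 <= (r2-r1)^2 * (r1*r2^3*(r2+2*r1) - s^4*(r1+2*r2)) / (2*r1*r2^3)).
  { apply Rmult_le_pos; [apply Rmult_le_pos; [apply pow2_ge_0|lra]|].
    apply Rlt_le, Rinv_0_lt_compat, Rmult_lt_0_compat; [lra|apply pow_lt; lra]. }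
  lra.
Qed.

Lemma slope1_antitone t s x : 0 <= t -> t <= s -> 0 < x -> slope1 s x <= slope1 t x.
Proof.
  intros Ht Hts Hx. unfold slope1.
  destruct (sqrt_sqr_add_spec t x Ht Hx) as [_ [p1 _]].
  assert (sqrt (t^2 + x) <= sqrt (s^2 + x)) by (apply sqrt_le_1_alt; nra).
  unfold Rdiv. apply Rmult_le_compat_l; [apply pow2_ge_0|].
  apply Rinv_le_contravar; [apply Rmult_lt_0_compat; [lra|apply pow_lt; lra]|].
  apply Rmult_le_compat_l; [lra|]. apply pow_incr; lra.
Qed.

Lemma slope2_antitone t s x : 0 <= t -> t <= s -> 0 < x -> slope2 s x <= slope2 t x.
Proof.
  intros Ht Hts Hx. unfold slope2.
  destruct (sqrt_sqr_add_spec t x Ht Hx) as [_ [p1 _]].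
  assert (sqrt (t^2 + x) <= sqrt (s^2 + x)) by (apply sqrt_le_1_alt; nra).
  unfold Rdiv. apply Rmult_le_compat_l; [apply pow2_ge_0|].
  apply Rinv_le_contravar; [apply Rmult_lt_0_compat; [lra|apply pow_lt; lra]|].
  apply Rmult_le_compat; [lra|apply pow2_ge_0|lra|]. apply pow_incr; lra.
Qed.

Lemma is_RInt_scal_sin k : is_RInt (fun t => k * sin t) 0 (PI/2) k.
Proof.
  assert (E : k = minus (- k * cos (PI/2)) (- k * cos 0)).
  { change (minus ?u ?v) with (Rminus u v). rewrite cos_PI2, cos_0. ring. }
  assert (H : is_RInt (fun t => k * sin t) 0 (PI/2)
                (minus ((fun t => - k * cos t) (PI/2)) ((fun t => - k * cos t) 0))).
  { apply (is_RInt_derive (fun t => - k * cos t)).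
    - intros x _. auto_derive; [easy|ring].
    - intros x _. apply (ex_derive_continuous (K := R_AbsRing) (V := R_NormedModule)).
      auto_derive. easy. }
  cbv beta in H. now rewrite <- E in H.
Qed.

Lemma is_derive_slope1_primitive c z x : 0 < z ->
  is_derive (fun t => z/2 * t / sqrt ((c*t)^2 + z)) x (slope1 (c*x) z).
Proof.
  intros Hz. unfold slope1.
  assert (e : sqrt ((c*x)^2 + z) * sqrt ((c*x)^2 + z) = (c*x)^2 + z) by (apply sqrt_sqrt; nra).
  assert (p : 0 < sqrt ((c*x)^2 + z)) by (apply sqrt_lt_R0; nra).
  auto_derive; replace (c*x*(c*x*1) + z) with ((c*x)^2 + z) by ring.
  - repeat split; [nra|lra].
  - set (r := sqrt ((c*x)^2 + z)) in *. clearbody r.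
    replace z with (r*r - (c*x)^2) by lra. field. lra.
Qed.

Lemma is_derive_slope2_primitive c z x : 0 < c -> 0 < z -> 0 <= x ->
  is_derive (fun t => - (z^2 / (2*c)) / (sqrt ((c*t)^2 + z) + c*t)^2) x (slope2 (c*x) z).
Proof.
  intros Hc Hz Hx. unfold slope2.
  assert (0 <= c*x) by nra.
  assert (e : sqrt ((c*x)^2 + z) * sqrt ((c*x)^2 + z) = (c*x)^2 + z) by (apply sqrt_sqrt; nra).
  assert (p : 0 < sqrt ((c*x)^2 + z)) by (apply sqrt_lt_R0; nra).
  auto_derive; replace (c*x*(c*x*1) + z) with ((c*x)^2 + z) by ring.
  - repeat split; nra.
  - set (r := sqrt ((c*x)^2 + z)) in *. clearbody r.
    replace z with (r*r - (c*x)^2) by lra. field. split; nra.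
Qed.

Lemma continuous_slope1 c z x : 0 < z -> continuous (fun t => slope1 (c*t) z) x.
Proof.
  intros Hz. apply (ex_derive_continuous (K := R_AbsRing) (V := R_NormedModule)).
  unfold slope1.
  assert (0 < sqrt ((c*x)^2 + z)) by (apply sqrt_lt_R0; nra).
  auto_derive. replace (c*x*(c*x*1) + z) with ((c*x)^2 + z) by ring.
  repeat split; [nra|]. apply Rgt_not_eq. repeat apply Rmult_lt_0_compat; lra.
Qed.

Lemma continuous_slope2 c z x : 0 <= c -> 0 < z -> 0 <= x ->
  continuous (fun t => slope2 (c*t) z) x.
Proof.
  intros Hc Hz Hx. apply (ex_derive_continuous (K := R_AbsRing) (V := R_NormedModule)).
  unfold slope2.
  assert (0 <= c*x) by nra.
  assert (0 < sqrt ((c*x)^2 + z)) by (apply sqrt_lt_R0; nra).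
  auto_derive. replace (c*x*(c*x*1) + z) with ((c*x)^2 + z) by ring.
  repeat split; try nra. apply Rgt_not_eq. repeat apply Rmult_lt_0_compat; nra.
Qed.

Lemma is_RInt_slope1 c b z : 0 < z ->
  is_RInt (fun t => slope1 (c*t) z) 0 b (z * b / (2 * sqrt ((c*b)^2 + z))).
Proof.
  intros Hz.
  assert (E : z * b / (2 * sqrt ((c*b)^2 + z)) =
              minus (z/2 * b / sqrt ((c*b)^2 + z)) (z/2 * 0 / sqrt ((c*0)^2 + z))).
  { change (minus ?u ?v) with (Rminus u v). field.
    split; apply Rgt_not_eq, sqrt_lt_R0; nra. }
  rewrite E. apply (is_RInt_derive (fun t => z/2 * t / sqrt ((c*t)^2 + z))).
  - intros x _. now apply is_derive_slope1_primitive.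
  - intros x _. now apply continuous_slope1.
Qed.

Lemma is_RInt_slope2 c b z : 0 < c -> 0 <= b -> 0 < z ->
  is_RInt (fun t => slope2 (c*t) z) 0 b (b * (sqrt ((c*b)^2 + z) - c*b)).
Proof.
  intros Hc Hb Hz.
  set (F := fun t => - (z^2 / (2*c)) / (sqrt ((c*t)^2 + z) + c*t)^2).
  assert (E : b * (sqrt ((c*b)^2 + z) - c*b) = minus (F b) (F 0)).
  { change (minus ?u ?v) with (Rminus u v). unfold F.
    replace ((c*0)^2 + z) with z by ring. rewrite Rmult_0_r, Rplus_0_r.
    assert (e0 := sqrt_sqrt z (Rlt_le _ _ Hz)).
    assert (e : sqrt ((c*b)^2 + z) * sqrt ((c*b)^2 + z) = (c*b)^2 + z) by (apply sqrt_sqrt; nra).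
    assert (p : 0 < sqrt ((c*b)^2 + z)) by (apply sqrt_lt_R0; nra).
    replace (sqrt z ^ 2) with z by (rewrite <- e0 at 1; ring).
    set (r := sqrt ((c*b)^2 + z)) in *. clearbody r.
    replace z with (r*r - (c*b)^2) by lra. field. split; nra. }
  rewrite E. apply (is_RInt_derive F).
  - intros x Hx. rewrite Rmin_left in Hx by lra. apply is_derive_slope2_primitive; lra.
  - intros x Hx. rewrite Rmin_left in Hx by lra. apply continuous_slope2; lra.
Qed.

Definition kernel_majorant (a z : R) : R :=
  2*a + z * (PI/2) / (2 * sqrt (a^2 + z)) + PI/2 * (sqrt (a^2 + z) - a).

Lemma is_RInt_Jordan_majorant a z : 0 < a -> 0 < z ->
  is_RInt (fun t => 2*a * sin t + slope1 (2*a/PI*t) z + slope2 (2*a/PI*t) z)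
    0 (PI/2) (kernel_majorant a z).
Proof.
  intros Ha Hz. assert (HP := PI_RGT_0).
  assert (Hcb : 2*a/PI * (PI/2) = a) by (field; lra).
  assert (I1 := is_RInt_slope1 (2*a/PI) (PI/2) z Hz).
  assert (I2 := is_RInt_slope2 (2*a/PI) (PI/2) z
                  ltac:(apply Rdiv_lt_0_compat; lra) ltac:(lra) Hz).
  rewrite Hcb in I1, I2.
  apply (is_RInt_plus (fun t => 2*a * sin t + slope1 (2*a/PI*t) z)).
  - apply (is_RInt_plus (fun t => 2*a * sin t)); [apply is_RInt_scal_sin|exact I1].
  - exact I2.
Qed.

Lemma kernel_majorant_le a z : 0 < a < 1 -> 0 < z -> kernel_majorant a z <= a^2 + 1 + 19/10*z.
Proof.
  intros Ha Hz. unfold kernel_majorant.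
  assert (HP := PI_RGT_0). assert (HP' := PI_lt_16_5).
  destruct (sqrt_sqr_add_spec a z ltac:(lra) Hz) as [e [p q]].
  set (r := sqrt (a^2 + z)) in *. clearbody r.
  set (h := r - a). replace r with (a + h) in * by (unfold h; ring). clearbody h.
  assert (hp : 0 < h) by lra.
  replace z with (h * (2*a + h)) in * by nra.
  (* [a + h] times the slack of the goal at [PI = 16/5] *)
  assert (Hpoly : 0 <= a*(1-a)^2 + h*(1 - 52/10*a + 48/10*a^2)
                      + h^2*(57/10*a - 24/10) + 19/10*h^3).
  { clear - Ha hp.
    assert (0 <= a*(1-a-h)^2) by (apply Rmult_le_pos; [lra|apply pow2_ge_0]).
    assert (0 <= h*(1-a-h)^2) by (apply Rmult_le_pos; [lra|apply pow2_ge_0]).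
    assert (0 <= h*(a-h)^2) by (apply Rmult_le_pos; [lra|apply pow2_ge_0]).
    assert (0 <= h*h*a) by (apply Rmult_le_pos; nra).
    nra. }
  apply (Rmult_le_reg_r (4*(a+h))); [lra|].
  replace ((2*a + h*(2*a+h) * (PI/2) / (2*(a+h)) + PI/2 * h) * (4*(a+h)))
    with (8*a*(a+h) + PI*h*(4*a+3*h)) by (field; lra).
  assert (PI*h*(4*a+3*h) <= 16/5*h*(4*a+3*h)) by (apply Rmult_le_compat_r; nra).
  lra.
Qed.

Lemma kernel_le_Jordan a x t : 0 <= a -> 0 < x -> 0 <= t <= PI/2 ->
  kernel (a * sin t) x <= 2*a * sin t + slope2 (2*a/PI*t) x.
Proof.
  intros Ha Hx Ht. destruct (Jordan_ineq_scaled a t Ha Ht) as [H0 Hts].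
  rewrite kernel_eq_slope2 by lra.
  assert (slope2 (a * sin t) x <= slope2 (2*a/PI*t) x) by (apply slope2_antitone; lra).
  lra.
Qed.

Lemma kernel_secant_le_Jordan a y z t : 0 <= a -> 0 < y -> y <= z -> 0 <= t <= PI/2 ->
  z * kernel (a * sin t) z - y * kernel (a * sin t) y
  <= (z - y) * (2*a * sin t + slope1 (2*a/PI*t) z + slope2 (2*a/PI*t) z).
Proof.
  intros Ha Hy Hyz Ht. destruct (Jordan_ineq_scaled a t Ha Ht) as [H0 Hts].
  assert (S := kernel_secant_le (a * sin t) y z ltac:(lra) Hy Hyz).
  assert (slope1 (a * sin t) z <= slope1 (2*a/PI*t) z) by (apply slope1_antitone; lra).
  assert (slope2 (a * sin t) z <= slope2 (2*a/PI*t) z) by (apply slope2_antitone; lra).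
  assert (0 <= z - y) by lra.
  nra.
Qed.

Definition kernel_int (a x : R) : R := RInt (fun t => kernel (a * sin t) x) 0 (PI/2).

Lemma ex_RInt_kernel a x : 0 < x -> ex_RInt (fun t => kernel (a * sin t) x) 0 (PI/2).
Proof.
  intros Hx. apply (ex_RInt_continuous (V := R_CompleteNormedModule)). intros t _.
  apply (ex_derive_continuous (K := R_AbsRing) (V := R_NormedModule)). unfold kernel.
  assert (0 < sqrt ((a * sin t)^2 + x)) by (apply sqrt_lt_R0; nra).
  auto_derive. replace (a * sin t * (a * sin t * 1) + x) with ((a * sin t)^2 + x) by ring.
  repeat split; [nra|lra].
Qed.

Lemma integral_kernel a x : 0 < x ->
  integral (fun t => kernel (a * sin t) x) 0 (PI/2) = kernel_int a x.
Proof. intros Hx. now apply integral_RInt, ex_RInt_kernel. Qed.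

Lemma integral_kernel_0 a : 0 < a ->
  integral (fun t => kernel (a * sin t) 0) 0 (PI/2) = 2*a.
Proof.
  intros Ha. assert (HP := PI_RGT_0).
  assert (H : is_RInt (fun t => kernel (a * sin t) 0) 0 (PI/2) (2*a)).
  { apply (is_RInt_ext (fun t => 2*a * sin t)); [|apply is_RInt_scal_sin].
    intros t Ht. rewrite Rmin_left, Rmax_right in Ht by lra.
    assert (0 < sin t) by (apply sin_gt_0; lra).
    change (2*a * sin t = kernel (a * sin t) 0).
    unfold kernel. rewrite !Rplus_0_r, <- Rsqr_pow2, sqrt_Rsqr by nra.
    unfold Rsqr. field. nra. }
  rewrite integral_RInt by (eexists; exact H). now apply is_RInt_unique.
Qed.

Lemma kernel_int_secant_le a y z : 0 < a -> 0 < y -> y <= z ->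
  z * kernel_int a z - y * kernel_int a y <= (z - y) * kernel_majorant a z.
Proof.
  intros Ha Hy Hyz. assert (HP := PI_RGT_0).
  assert (Iy := RInt_correct _ _ _ (ex_RInt_kernel a y Hy)).
  assert (Iz := RInt_correct _ _ _ (ex_RInt_kernel a z ltac:(lra))).
  assert (D := is_RInt_minus _ _ _ _ _ _ (is_RInt_scal _ _ _ z _ Iz) (is_RInt_scal _ _ _ y _ Iy)).
  assert (M := is_RInt_scal _ _ _ (z - y) _ (is_RInt_Jordan_majorant a z Ha ltac:(lra))).
  apply (is_RInt_le _ _ 0 (PI/2) _ _ ltac:(lra) D M).
  intros t Ht. apply kernel_secant_le_Jordan; lra.
Qed.

Lemma increasing_of_ratio_steps (G : R -> R) r : 1 < r ->
  (forall u v, 0 < u -> u < v -> v < r * u -> G u < G v) ->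
  forall y z, 0 < y -> y < z -> G y < G z.
Proof.
  intros Hr Hstep y z Hy Hyz.
  destruct (archimed_cor1 ((r - 1) * y / (z - y))) as [N [HN N0]].
  { apply Rdiv_lt_0_compat; nra. }
  assert (HNpos : 0 < INR N) by (apply lt_0_INR; lia).
  set (h := (z - y) / INR N).
  assert (hp : 0 < h) by (apply Rdiv_lt_0_compat; lra).
  assert (hsmall : h < (r - 1) * y).
  { apply (Rmult_lt_compat_l (z - y)) in HN; [|lra].
    replace ((z - y) * ((r - 1) * y / (z - y))) with ((r - 1) * y) in HN by (field; lra).
    exact HN. }
  assert (K : forall k, G y < G (y + INR (S k) * h)).
  { induction k as [|k IH].
    - rewrite Rmult_1_l. apply Hstep; lra.
    - eapply Rlt_trans; [exact IH|].
      assert (0 <= (r - 1) * (INR (S k) * h))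
        by (assert (0 <= INR (S k)) by apply pos_INR; apply Rmult_le_pos; nra).
      rewrite (S_INR (S k)).
      replace (y + (INR (S k) + 1) * h) with (y + INR (S k) * h + h) by ring.
      apply Hstep; nra. }
  destruct N as [|m]; [lia|].
  specialize (K m). replace (y + INR (S m) * h) with z in K by (unfold h; field; lra).
  exact K.
Qed.

Definition scaled_psi2 (a x : R) : R := x * (a^2 + x + 1 - kernel_int a x).

Lemma psi2_kernel a x d :
  psi2 a x d = 4/d * (a^2 + x + 1 - integral (fun t => kernel (a * sin t) x) 0 (PI/2)).
Proof.
  unfold psi2, kernel. do 3 f_equal.
  apply functional_extensionality; intro t. f_equal; [|f_equal]; ring.
Qed.

Lemma psi2_eq_scaled a x d : 0 < x -> 0 < d -> psi2 a x d = 4 / (d * x) * scaled_psi2 a x.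
Proof.
  intros Hx Hd. rewrite psi2_kernel, integral_kernel by exact Hx.
  unfold scaled_psi2. field. lra.
Qed.

Lemma scaled_psi2_increasing a y z : 0 < a < 1 -> 0 < y -> y < z ->
  scaled_psi2 a y < scaled_psi2 a z.
Proof.
  intros Ha. apply (increasing_of_ratio_steps _ (10/9)); [lra|].
  intros u v Hu Huv Hvu. unfold scaled_psi2.
  (* the increment is at least [(v - u) * (u - 9/10 * v)] *)
  assert (S := kernel_int_secant_le a u v ltac:(lra) Hu ltac:(lra)).
  assert (M := kernel_majorant_le a v Ha ltac:(lra)).
  assert ((v - u) * kernel_majorant a v <= (v - u) * (a^2 + 1 + 19/10*v))
    by (apply Rmult_le_compat_l; lra).
  nra.
Qed.

Lemma phi2_kernel s : phi2 s = integral (fun t => kernel (1 * sin t) (s^2)) 0 (PI/2).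
Proof.
  unfold phi2, kernel. f_equal.
  apply functional_extensionality; intro t. f_equal; [|f_equal]; ring.
Qed.

Lemma phi2_bounds s : 0 <= phi2 s <= 2 * sqrt (1 + s^2).
Proof.
  assert (HP := PI_RGT_0). rewrite phi2_kernel.
  destruct (Req_dec s 0) as [->|Hs].
  { rewrite pow_i, integral_kernel_0, Rplus_0_r, sqrt_1 by (lia || lra). lra. }
  assert (Hv : 0 < s^2) by (rewrite <- Rsqr_pow2; now apply Rsqr_pos_lt).
  set (v := s^2) in *. clearbody v.
  rewrite integral_kernel by exact Hv.
  assert (I := RInt_correct _ _ _ (ex_RInt_kernel 1 v Hv)).
  assert (I2 := is_RInt_slope2 (2*1/PI) (PI/2) v
                  ltac:(apply Rdiv_lt_0_compat; lra) ltac:(lra) Hv).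
  replace (2*1/PI * (PI/2)) with 1 in I2 by (field; lra).
  assert (U := is_RInt_plus _ _ _ _ _ _ (is_RInt_scal_sin (2*1)) I2).
  split.
  - apply RInt_ge_0; [lra|now apply ex_RInt_kernel|].
    intros t Ht. unfold kernel. apply Rdiv_le_0_compat; [nra|apply sqrt_lt_R0; nra].
  - eapply Rle_trans; [apply (is_RInt_le _ _ 0 (PI/2) _ _ ltac:(lra) I U)|].
    + intros t Ht. apply kernel_le_Jordan; lra.
    + change (2*1 + PI/2 * (sqrt (1^2 + v) - 1) <= 2 * sqrt (1 + v)).
      rewrite pow1.
      assert (1 <= sqrt (1 + v)) by (rewrite <- sqrt_1 at 1; apply sqrt_le_1_alt; lra).
      assert (HP4 := PI_4). nra.
Qed.

Lemma Lfun_coeff_nonneg s : 0 <= 1 - phi2 s ^ 2 / (4 * (1 + s^2)).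
Proof.
  destruct (phi2_bounds s) as [p0 p1].
  assert (e : sqrt (1 + s^2) * sqrt (1 + s^2) = 1 + s^2) by (apply sqrt_sqrt; nra).
  assert (phi2 s ^ 2 <= 4 * (1 + s^2)) by nra.
  assert (phi2 s ^ 2 / (4 * (1 + s^2)) <= 1)
    by (apply Rle_div_l; nra).
  lra.
Qed.

Lemma psi2_at_0 a d : 0 < a -> psi2 a 0 d = 4/d * (1 - a)^2.
Proof. intros Ha. rewrite psi2_kernel, integral_kernel_0 by exact Ha. ring. Qed.

Theorem mainTheorem17 :
  forall a : R, 0 < a < 1 ->
  forall d1 d2 : R, 0 < d1 -> d1 < d2 ->
    psi2 a (Lfun a d2) d2 < psi2 a (Lfun a d1) d1.
Proof.
  intros a Ha d1 d2 Hd1 Hd12. unfold Lfun.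
  assert (Hc := Lfun_coeff_nonneg (phi1_inv a)).
  set (c := 1 - phi2 (phi1_inv a) ^ 2 / (4 * (1 + phi1_inv a ^ 2))) in *.
  assert (Hd : 4/d2 < 4/d1) by (apply Rmult_lt_compat_l; [lra|apply Rinv_lt_contravar; nra]).
  destruct (Req_dec c 0) as [->|Hc0].
  - rewrite !Rmult_0_r, !psi2_at_0 by lra.
    apply Rmult_lt_compat_r; [nra|exact Hd].
  - assert (Hpsi : forall d, 0 < d -> psi2 a (4/d * c) d = / c * scaled_psi2 a (4/d * c)).
    { intros d Hd0. rewrite psi2_eq_scaled by (try apply Rmult_lt_0_compat;
        try apply Rdiv_lt_0_compat; lra).
      field. lra. }
    rewrite !Hpsi by lra.
    apply Rmult_lt_compat_l; [apply Rinv_0_lt_compat; lra|].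
    apply scaled_psi2_increasing; [exact Ha| |apply Rmult_lt_compat_r; lra].
    apply Rmult_lt_0_compat; [apply Rdiv_lt_0_compat|]; lra.
Qed.
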